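(* Let $(A,\varphi,\phi_A,[\cdot,\cdot]_A,a_A,K,\langle\cdot,\cdot\rangle)$ be a para-Kähler hom-Lie algebroid, $\Omega(X,Y)=\langle(\phi_A\circ K)X,Y\rangle$, and $\nabla^a$ the connection determined by $\Omega(\nabla^{a}_XY,\phi_A(Z))=a_A(\phi_A(X))\Omega(Y,Z)-\Omega(\phi_A(Y),[X,Z]_A)$. Then for $\epsilon\in\{1,-1\}$: $\nabla^a$ restricts to a product on $\Gamma(A^\epsilon)$, and $(\Gamma(A^\epsilon),\nabla^a,\phi_{A^\epsilon})$ is a hom-left symmetric algebra, i.e. for all $X,Y,Z\in\Gamma(A^\epsilon)$, $$\nabla^a_{\nabla^a_XY}\phi_A(Z)-\nabla^a_{\phi_A(X)}\nabla^a_YZ=\nabla^a_{\nabla^a_YX}\phi_A(Z)-\nabla^a_{\phi_A(Y)}\nabla^a_XZ;$$ its commutator $\nabla^a_XY-\nabla^a_YX$ equals $[X,Y]_A$ and defines a hom-Lie algebra structure on $\Gamma(A^\epsilon)$; consequently $(A^\epsilon,\varphi,\phi_{A^\epsilon},[\cdot,\cdot]_{A^\epsilon},a_{A^\epsilon})$ (restrictions of $\phi_A,[\cdot,\cdot]_A,a_A$) is a hom-Lie algebroid.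
   Context: Standing conventions. $M$ is a smooth manifold, $\varphi:M\to M$ a diffeomorphism, $\varphi^*f=f\circ\varphi$. A hom-bundle $(A\to M,\varphi,\phi_A)$ is a vector bundle $A\to M$ together with an invertible $\mathbb R$-linear map $\phi_A:\Gamma(A)\to\Gamma(A)$ with $\phi_A(fX)=\varphi^*(f)\phi_A(X)$. $\varphi^!TM$ is the pullback bundle; its sections are identified with $\mathbb R$-linear maps $D:C^\infty(M)\to C^\infty(M)$ with $D(fg)=D(f)\varphi^*(g)+\varphi^*(f)D(g)$. A hom-Lie algebroid $(A,\varphi,\phi_A,[\cdot,\cdot]_A,a_A)$ consists of a hom-bundle, a skew-symmetric $\mathbb R$-bilinear bracket on $\Gamma(A)$ with $\phi_A[X,Y]_A=[\phi_A X,\phi_A Y]_A$ and $[\phi_A(X),[Y,Z]_A]_A+[\phi_A(Y),[Z,X]_A]_A+[\phi_A(Z),[X,Y]_A]_A=0$ (a hom-Lie algebra), and a bundle map $a_A:A\to\varphi^!TM$ such that $[X,fY]_A=\varphi^*(f)[X,Y]_A+a_A(\phi_A(X))(f)\phi_A(Y)$, $\varphi^*\circ a_A(X)=a_A(\phi_A(X))\circ\varphi^*$, and $a_A([X,Y]_A)\circ\varphi^*=a_A(\phi_AX)\circ a_A(Y)-a_A(\phi_AY)\circ a_A(X)$. Pseudo-Riemannian metric: a symmetric nondegenerate bilinear form $\langle\cdot,\cdot\rangle$ on $A$ with $\langle\phi_AX,\phi_AY\rangle=\varphi^*\langle X,Y\rangle$. The hom-Levi-Civita connection is the unique $\mathbb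 R$-bilinear $\nabla:\Gamma(A)\times\Gamma(A)\to\Gamma(A)$ with $\nabla_{fX}Y=\varphi^*(f)\nabla_XY$, $\nabla_X(fY)=\varphi^*(f)\nabla_XY+a_A(\phi_AX)(f)\phi_A(Y)$, $[X,Y]_A=\nabla_XY-\nabla_YX$, and $a_A(\phi_AX)\langle Y,Z\rangle=\langle\nabla_XY,\phi_AZ\rangle+\langle\phi_AY,\nabla_XZ\rangle$. An almost para-complex structure is an invertible map $K:\Gamma(A)\to\Gamma(A)$ with $(\phi_A\circ K)^2=\mathrm{Id}$, $\phi_A\circ K=K\circ\phi_A$, and such that $A^1=\ker(\phi_A\circ K-\mathrm{Id})$ and $A^{-1}=\ker(\phi_A\circ K+\mathrm{Id})$ have the same rank (so $A=A^1\oplus A^{-1}$). $(K,\langle\cdot,\cdot\rangle)$ is almost para-Hermitian if $\langle(\phi_A\circ K)X,(\phi_A\circ K)Y\rangle=-\langle X,Y\rangle$. A para-Kähler hom-Lie algebroid is an almost para-Hermitian hom-Lie algebroid with $\nabla_X\phi_A(KY)=\phi_A(K(\nabla_XY))$ for all $X,Y$, $\nabla$ the hom-Levi-Civita connection. $\phi_{A^\epsilon}$ denotes the restriction of $\phi_A$ to $\Gamma(A^\epsilon)$. *)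

(* Algebraic (Serre-Swan style) model of a hom-Lie algebroid:
   C  plays the role of C^oo(M)  (a commutative R-algebra, R a real field),
   V  plays the role of Gamma(A) (a C-module),
   sigma : C -> C plays the role of phi^* = (. o varphi),
   sections of varphi^! TM are maps D : C -> C (R-linear sigma-derivations),
   sections of a subbundle are described by a predicate S : V -> Prop.  *)
From HB Require Import structures.
From mathcomp Require Import all_boot all_order all_algebra.
Set Implicit Arguments. Unset Strict Implicit. Unset Printing Implicit Defensive.
Import GRing.Theory.
Local Open Scope ring_scope.

Section HomLie.
Variables (R : realFieldType) (C : comAlgType R) (V : lmodType C).

Definition rsc (r : R) : C := r%:A.

(* sigma = varphi^* for a diffeomorphism varphi: an R-algebra automorphism *)
Definition is_diffeo_pullback (sigma : C -> C) : Prop :=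
  [/\ bijective sigma,
      forall f h, sigma (f + h) = sigma f + sigma h,
      forall f h, sigma (f * h) = sigma f * sigma h,
      sigma 1 = 1 &
      forall (r : R) f, sigma (r *: f) = r *: sigma f].

Definition is_pullback_vf (sigma : C -> C) (D : C -> C) : Prop :=
  (forall (r : R) f h, D (r *: f + h) = r *: D f + D h) /\
  (forall f h, D (f * h) = D f * sigma h + sigma f * D h).

Definition is_submodule (S : V -> Prop) : Prop :=
  S 0 /\ forall (f : C) X Y, S X -> S Y -> S (f *: X + Y).

Definition is_hom_bundle_on (S : V -> Prop) (sigma : C -> C) (phi : V -> V) : Prop :=
  [/\ is_submodule S,
      (forall X, S X -> S (phi X)),
      (forall Y, S Y -> exists2 X, S X & phi X = Y),
      (forall X Y, S X -> S Y -> phi X = phi Y -> X = Y) &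
      (forall f X Y, S X -> S Y -> phi (f *: X + Y) = sigma f *: phi X + phi Y)].

Definition is_hom_lie_algebra_on (S : V -> Prop) (phi : V -> V)
    (br : V -> V -> V) : Prop :=
  [/\ (forall X Y, S X -> S Y -> S (br X Y)),
      (forall (r : R) X Y Z, S X -> S Y -> S Z ->
          br (rsc r *: X + Y) Z = rsc r *: br X Z + br Y Z /\
          br Z (rsc r *: X + Y) = rsc r *: br Z X + br Z Y),
      (forall X Y, S X -> S Y -> br X Y = - br Y X),
      (forall X Y, S X -> S Y -> phi (br X Y) = br (phi X) (phi Y)) &
      (forall X Y Z, S X -> S Y -> S Z ->
          br (phi X) (br Y Z) + br (phi Y) (br Z X) + br (phi Z) (br X Y) = 0)].

Definition is_anchor_on (S : V -> Prop) (sigma : C -> C) (phi : V -> V)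
    (br : V -> V -> V) (a : V -> C -> C) : Prop :=
  [/\ (forall X, S X -> is_pullback_vf sigma (a X)),
      (forall f X Y h, S X -> S Y -> a (f *: X + Y) h = f * a X h + a Y h),
      (forall X Y f, S X -> S Y ->
          br X (f *: Y) = sigma f *: br X Y + a (phi X) f *: phi Y),
      (forall X f, S X -> sigma (a X f) = a (phi X) (sigma f)) &
      (forall X Y f, S X -> S Y ->
          a (br X Y) (sigma f) = a (phi X) (a Y f) - a (phi Y) (a X f))].

Definition is_hom_lie_algebroid_on (S : V -> Prop) (sigma : C -> C)
    (phi : V -> V) (br : V -> V -> V) (a : V -> C -> C) : Prop :=
  [/\ is_diffeo_pullback sigma,
      is_hom_bundle_on S sigma phi,
      is_hom_lie_algebra_on S phi br &
      is_anchor_on S sigma phi br a].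

Definition is_hom_lie_algebroid sigma phi br a : Prop :=
  is_hom_lie_algebroid_on (fun _ => True) sigma phi br a.

(* pseudo-Riemannian metric (nondegeneracy stated on sections) *)
Definition is_pseudo_metric (sigma : C -> C) (phi : V -> V) (g : V -> V -> C) : Prop :=
  [/\ (forall X Y, g X Y = g Y X),
      (forall f X Y Z, g (f *: X + Y) Z = f * g X Z + g Y Z),
      (forall X, (forall Y, g X Y = 0) -> X = 0) &
      (forall X Y, g (phi X) (phi Y) = sigma (g X Y))].

Definition is_hom_levi_civita (sigma : C -> C) (phi : V -> V) (br : V -> V -> V)
    (a : V -> C -> C) (g : V -> V -> C) (nabla : V -> V -> V) : Prop :=
  [/\ (forall X Y Z, nabla (X + Y) Z = nabla X Z + nabla Y Z /\
                     nabla X (Y + Z) = nabla X Y + nabla X Z),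
      (forall f X Y, nabla (f *: X) Y = sigma f *: nabla X Y),
      (forall f X Y, nabla X (f *: Y) = sigma f *: nabla X Y + a (phi X) f *: phi Y),
      (forall X Y, br X Y = nabla X Y - nabla Y X) &
      (forall X Y Z, a (phi X) (g Y Z) = g (nabla X Y) (phi Z) + g (phi Y) (nabla X Z))].

(* almost para-complex structure (phi o K assumed C-linear,
   the equal-rank condition is not expressible in this model) *)
Definition is_almost_para_complex (phi K : V -> V) : Prop :=
  [/\ bijective K,
      (forall X, phi (K (phi (K X))) = X),
      (forall X, phi (K X) = K (phi X)) &
      (forall f X Y, phi (K (f *: X + Y)) = f *: phi (K X) + phi (K Y))].

Definition is_para_kahler (sigma : C -> C) (phi : V -> V) (br : V -> V -> V)
    (a : V -> C -> C) (K : V -> V) (g : V -> V -> C) (nabla : V -> V -> V) : Prop :=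
  [/\ is_hom_lie_algebroid sigma phi br a,
      is_pseudo_metric sigma phi g,
      is_almost_para_complex phi K,
      (forall X Y, g (phi (K X)) (phi (K Y)) = - g X Y) &
      (is_hom_levi_civita sigma phi br a g nabla /\
       forall X Y, nabla X (phi (K Y)) = phi (K (nabla X Y)))].

Definition Omega (phi K : V -> V) (g : V -> V -> C) (X Y : V) : C := g (phi (K X)) Y.

End HomLie.

(* Write J = phi o K, fix eps = 1 or -1, let S be the space of sections X with
   J X = eps X (the sections of A^eps), and Omega (X, Y) = <J X, Y>.
   1. The Kähler condition nabla_X (J Y) = J (nabla_X Y) makes S stable under
      every nabla_X, and the para-Hermitian condition <J X, J Y> = - <X, Y>
      makes S isotropic for the metric.
   2. Omega is biadditive, phi-invariant and nondegenerate against the image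
      of phi.  Pairing with Omega, the defining identity of nabla^a and the
      metric compatibility plus torsion-freeness of nabla differ exactly by
      <phi (J Y), nabla_Z X>, which vanishes on S by isotropy.  Hence
      nabla^a = nabla on S: nabla^a is S-valued there and its commutator is
      the bracket [.,.]_A.
   3. Whenever nabla^a_X Y - nabla^a_Y X = [X, Y]_A, pairing the defect of
      hom-left-symmetry with Omega (., phi W) and expanding by the defining
      identity reduces it to the hom-Jacobi identity, so it vanishes.
   The hom-Lie algebroid structure on S is the restriction of the ambient
   one, S being a phi-stable, bracket-closed submodule on which phi is onto. *)
From HB Require Import structures.
From mathcomp Require Import all_boot all_order all_algebra.
From mathcomp Require Import ring.
Set Implicit Arguments. Unset Strict Implicit. Unset Printing Implicit Defensive.
Import GRing.Theory Num.Theory.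
Local Open Scope ring_scope.

Section AdditiveMaps.
Variables (M N : zmodType) (f : M -> N).
Hypothesis fD : forall x y, f (x + y) = f x + f y.

Lemma additive0 : f 0 = 0.
Proof. by apply: (@addrI _ (f 0)); rewrite addr0 -fD addr0. Qed.

Lemma additiveN x : f (- x) = - f x.
Proof. by apply/eqP; rewrite -addr_eq0 -fD addNr additive0. Qed.

Lemma additiveB x y : f (x - y) = f x - f y.
Proof. by rewrite fD additiveN. Qed.

End AdditiveMaps.

(* In characteristic zero a vector equal to its opposite vanishes; this is
   how isotropy of the eigen-bundles follows from <J X, J Y> = - <X, Y>. *)
Lemma eq_opp_eq0 (F : numFieldType) (M : lmodType F) (x : M) : x = - x -> x = 0.
Proof.
move=> xN; have : (2%:R : F) *: x = 0 by rewrite scaler_nat mulr2n {2}xN subrr.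
by move/eqP; rewrite scaler_eq0 pnatr_eq0 /= => /eqP.
Qed.

Section Restriction.
Variables (R : realFieldType) (C : comAlgType R) (V : lmodType C).
Variables (S : V -> Prop) (sigma : C -> C) (phi : V -> V) (br : V -> V -> V).

Lemma anchor_restrict (a : V -> C -> C) :
  is_anchor_on (fun _ => True) sigma phi br a -> is_anchor_on S sigma phi br a.
Proof.
case=> vf lin leibniz comm_sigma comm_br.
by split=> *; [apply: vf | apply: lin | apply: leibniz | apply: comm_sigma
  | apply: comm_br].
Qed.

Lemma hom_lie_algebra_restrict :
  (forall X Y, S X -> S Y -> S (br X Y)) ->
  is_hom_lie_algebra_on (fun _ => True) phi br -> is_hom_lie_algebra_on S phi br.
Proof.
move=> Sbr [_ lin skew hom jacobi].
by split=> *; [apply: Sbr | apply: lin | apply: skew | apply: hom | apply: jacobi].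
Qed.

Lemma hom_lie_algebra_congr (br' : V -> V -> V) :
  (forall f X Y, S X -> S Y -> S (f *: X + Y)) -> (forall X, S X -> S (phi X)) ->
  (forall X Y, S X -> S Y -> br' X Y = br X Y) ->
  is_hom_lie_algebra_on S phi br -> is_hom_lie_algebra_on S phi br'.
Proof.
move=> Scomb Sphi eq_br [Sbr lin skew hom jacobi]; split.
- by move=> X Y SX SY; rewrite eq_br //; apply: Sbr.
- move=> r X Y Z SX SY SZ; have := Scomb (@rsc _ C r) X Y SX SY.
  by move=> Scomb'; rewrite !eq_br //; apply: lin.
- by move=> X Y SX SY; rewrite !eq_br //; apply: skew.
- move=> X Y SX SY; have SpX := Sphi X SX; have SpY := Sphi Y SY.
  by rewrite !eq_br //; apply: hom.
- move=> X Y Z SX SY SZ.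
  have SpX := Sphi X SX; have SpY := Sphi Y SY; have SpZ := Sphi Z SZ.
  have SYZ := Sbr Y Z SY SZ; have SZX := Sbr Z X SZ SX; have SXY := Sbr X Y SX SY.
  by rewrite (eq_br Y) // (eq_br Z) // (eq_br X) // !eq_br //; apply: jacobi.
Qed.

End Restriction.

Section ParaKahlerEigenbundles.
Variables (R : realFieldType) (C : comAlgType R) (V : lmodType C).
Variables (sigma : C -> C) (phi : V -> V) (br : V -> V -> V) (a : V -> C -> C).
Variables (K : V -> V) (g : V -> V -> C) (nabla nablaa : V -> V -> V) (eps : C).

Local Notation J X := (phi (K X)).
Local Notation Om := (Omega phi K g).

Hypothesis algebroid : is_hom_lie_algebroid sigma phi br a.
Hypothesis metric : is_pseudo_metric sigma phi g.
Hypothesis para_complex : is_almost_para_complex phi K.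
Hypothesis para_hermitian : forall X Y, g (J X) (J Y) = - g X Y.
Hypothesis levi_civita : is_hom_levi_civita sigma phi br a g nabla.
Hypothesis kahler : forall X Y, nabla X (J Y) = J (nabla X Y).
Hypothesis nablaa_def : forall X Y Z,
  Om (nablaa X Y) (phi Z) = a (phi X) (Om Y Z) - Om (phi Y) (br X Z).
Hypothesis eps_sign : eps = 1 \/ eps = -1.

Lemma sigma_sign : sigma eps = eps.
Proof.
case: algebroid => [[_ sigmaD _ sigma1 _] _ _ _].
by case: eps_sign => ->; rewrite ?(additiveN sigmaD) sigma1.
Qed.

Lemma phi_add X Y : phi (X + Y) = phi X + phi Y.
Proof.
case: algebroid => [[_ _ _ sigma1 _] [_ _ _ _ phi_comb] _ _].
by rewrite -{1}[X]scale1r phi_comb // sigma1 scale1r.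
Qed.

Lemma phi_scale f X : phi (f *: X) = sigma f *: phi X.
Proof.
case: algebroid => _ [_ _ _ _ phi_comb] _ _.
by rewrite -[f *: X]addr0 phi_comb // (additive0 phi_add) addr0.
Qed.

Lemma anchor_add U f h : a U (f + h) = a U f + a U h.
Proof.
case: algebroid => _ _ _ [vf _ _ _ _]; case: (vf U I) => Rlin _.
by rewrite -[f]scale1r Rlin !scale1r.
Qed.

(* sigma-derivations kill constants, in particular the sign eps. *)
Lemma anchor_sign U : a U eps = 0.
Proof.
case: algebroid => [[_ _ _ sigma1 _] _ _ [vf _ _ _ _]]; case: (vf U I) => _ leibniz.
have a1 : a U 1 = 0.
  by apply: (@addrI _ (a U 1)); rewrite addr0 -{3}(mulr1 1) leibniz sigma1 mulr1 mul1r.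
by case: eps_sign => ->; rewrite ?(additiveN (anchor_add U)) a1 ?oppr0.
Qed.

Lemma anchor_addl X Y h : a (X + Y) h = a X h + a Y h.
Proof.
case: algebroid => _ _ _ [_ lin _ _ _].
by rewrite -{1}[X]scale1r lin // mul1r.
Qed.

Lemma br_addl Z X Y : br (X + Y) Z = br X Z + br Y Z.
Proof.
case: algebroid => _ _ [_ lin _ _ _] _; have [] := lin 1 X Y Z I I I.
by rewrite /rsc !scale1r.
Qed.

Lemma br_addr Z X Y : br Z (X + Y) = br Z X + br Z Y.
Proof.
case: algebroid => _ _ [_ lin _ _ _] _; have [_] := lin 1 X Y Z I I I.
by rewrite /rsc !scale1r.
Qed.

Lemma J_add X Y : J (X + Y) = J X + J Y.
Proof. by case: para_complex => _ _ _ Jlin; rewrite -{1}[X]scale1r Jlin scale1r. Qed.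

Lemma J_scale f X : J (f *: X) = f *: J X.
Proof.
case: para_complex => _ _ _ Jlin.
by rewrite -[f *: X]addr0 Jlin (additive0 J_add) addr0.
Qed.

Lemma g_addl Z X Y : g (X + Y) Z = g X Z + g Y Z.
Proof. by case: metric => _ glin _ _; rewrite -{1}[X]scale1r glin mul1r. Qed.

Lemma g_scalel f X Z : g (f *: X) Z = f * g X Z.
Proof.
case: metric => _ glin _ _.
by rewrite -[f *: X]addr0 glin (additive0 (g_addl Z)) addr0.
Qed.

Lemma g_addr Z X Y : g Z (X + Y) = g Z X + g Z Y.
Proof. by case: metric => gsym _ _ _; rewrite !(gsym Z) g_addl. Qed.

Lemma g_scaler f X Z : g Z (f *: X) = f * g Z X.
Proof. by case: metric => gsym _ _ _; rewrite !(gsym Z) g_scalel. Qed.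

Lemma Omega_addl W U U' : Om (U + U') W = Om U W + Om U' W.
Proof. by rewrite /Omega J_add g_addl. Qed.

Lemma Omega_addr U W W' : Om U (W + W') = Om U W + Om U W'.
Proof. by rewrite /Omega g_addr. Qed.

Lemma Omega_phi U W : Om (phi U) (phi W) = sigma (Om U W).
Proof.
case: para_complex => _ _ phiK _; case: metric => _ _ _ gphi.
by rewrite /Omega -phiK gphi.
Qed.

Lemma Omega_subl W U U' : Om (U - U') W = Om U W - Om U' W.
Proof. exact: (additiveB (Omega_addl W)). Qed.

Lemma Omega_oppr U W : Om U (- W) = - Om U W.
Proof. exact: (additiveN (Omega_addr U)). Qed.

Lemma Omega_nondeg U : (forall Z, Om U (phi Z) = 0) -> U = 0.
Proof.
case: para_complex => _ JJ _ _; case: metric => _ _ nondeg _.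
case: algebroid => _ [_ _ phi_onto _ _] _ _ OmU.
have JU : J U = 0.
  by apply: nondeg => Y; have [Z _ <-] := phi_onto Y I; apply: OmU.
by rewrite -(JJ U) JU (additive0 J_add).
Qed.

Definition eigen (X : V) : Prop := J X = eps *: X.

Lemma eigen0 : eigen 0.
Proof. by rewrite /eigen (additive0 J_add) scaler0. Qed.

Lemma eigen_comb f X Y : eigen X -> eigen Y -> eigen (f *: X + Y).
Proof.
rewrite /eigen => EX EY.
by rewrite J_add J_scale EX EY scalerA mulrC -scalerA scalerDr.
Qed.

Lemma eigen_sub X Y : eigen X -> eigen Y -> eigen (X - Y).
Proof. by rewrite /eigen => EX EY; rewrite (additiveB J_add) EX EY scalerBr. Qed.

(* phi commutes with J and sigma fixes eps, so phi preserves A^eps, and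
   injectivity of phi gives the converse. *)
Lemma eigen_phi X : eigen X -> eigen (phi X).
Proof.
case: para_complex => _ _ phiK _; rewrite /eigen => EX.
by rewrite -phiK EX phi_scale sigma_sign.
Qed.

Lemma eigen_phi_preimage X : eigen (phi X) -> eigen X.
Proof.
case: para_complex => _ _ phiK _; case: algebroid => _ [_ _ _ phi_inj _] _ _.
by rewrite /eigen => EpX; apply: phi_inj => //; rewrite phi_scale sigma_sign phiK.
Qed.

Lemma eigen_J X : eigen X -> eigen (J X).
Proof. by rewrite /eigen => EX; rewrite EX J_scale EX. Qed.

(* The Kähler condition: nabla_X preserves A^eps. *)
Lemma eigen_nabla X Y : eigen Y -> eigen (nabla X Y).
Proof.
case: levi_civita => _ _ leibniz _ _; rewrite /eigen => EY.
by rewrite -kahler EY leibniz sigma_sign anchor_sign scale0r addr0.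
Qed.

(* A^eps is isotropic, since <J U, J W> = eps^2 <U, W> = - <U, W> there. *)
Lemma eigen_isotropic U W : eigen U -> eigen W -> g U W = 0.
Proof.
rewrite /eigen => EU EW; apply: eq_opp_eq0.
have eps2 : eps * eps = 1 by case: eps_sign => ->; rewrite ?mulrNN mulr1.
by rewrite -para_hermitian EU EW g_scalel g_scaler mulrA eps2 mul1r.
Qed.

Lemma nablaa_eigen X Y : eigen X -> eigen Y -> nablaa X Y = nabla X Y.
Proof.
move=> EX EY; apply/eqP; rewrite -subr_eq0; apply/eqP.
apply: Omega_nondeg => Z.
case: levi_civita => _ _ _ torsion compat; case: para_complex => _ _ phiK _.
have iso : g (phi (J Y)) (nabla Z X) = 0.
  by apply: eigen_isotropic; [apply/eigen_phi/eigen_J | apply: eigen_nabla].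
rewrite Omega_subl nablaa_def /Omega compat kahler torsion -phiK.
by rewrite (additiveB (g_addr _)) iso subr0 addrK subrr.
Qed.

Lemma nablaa_commutator X Y : eigen X -> eigen Y -> nablaa X Y - nablaa Y X = br X Y.
Proof.
by case: levi_civita => _ _ _ torsion _ EX EY; rewrite !nablaa_eigen // torsion.
Qed.

Lemma eigen_nablaa X Y : eigen X -> eigen Y -> eigen (nablaa X Y).
Proof. by move=> EX EY; rewrite nablaa_eigen //; apply: eigen_nabla. Qed.

Lemma eigen_br X Y : eigen X -> eigen Y -> eigen (br X Y).
Proof.
case: levi_civita => _ _ _ torsion _ EX EY.
by rewrite torsion; apply: eigen_sub; apply: eigen_nabla.
Qed.

Lemma Omega_nablaa_phi Y Z U : sigma (Om (nablaa Y Z) U)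
  = a (phi (phi Y)) (Om (phi Z) U) - Om (phi (phi Z)) (br (phi Y) U).
Proof.
case: algebroid => [[_ sigmaD _ _ _] [_ _ phi_onto _ _] [_ _ _ hom _] [_ _ _ a_sigma _]].
have [U' _ <-] := phi_onto U I.
by rewrite nablaa_def (additiveB sigmaD) a_sigma // -!Omega_phi hom.
Qed.

(* Hom-left-symmetry of nabla^a holds at any pair (X, Y) at which nabla^a is
   torsion-free with respect to [.,.]_A: pairing with Omega reduces the
   defect to the hom-Jacobi identity. *)
Lemma nablaa_hom_left_symmetric X Y Z :
  nablaa X Y - nablaa Y X = br X Y ->
  nablaa (nablaa X Y) (phi Z) - nablaa (phi X) (nablaa Y Z)
  = nablaa (nablaa Y X) (phi Z) - nablaa (phi Y) (nablaa X Z).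
Proof.
move=> torsion_free; apply/eqP; rewrite -subr_eq0; apply/eqP.
apply: Omega_nondeg => W.
case: algebroid => _ [_ _ phi_onto _ _] [_ _ skew hom jacobi] [_ _ _ _ a_br].
have [W1 _ <-] := phi_onto W I.
have splitXY : nablaa X Y = nablaa Y X + br X Y by rewrite -torsion_free addrC subrK.
rewrite !Omega_subl !nablaa_def splitXY phi_add anchor_addl br_addl Omega_addr.
rewrite (Omega_phi Z W1) (hom X Y) // a_br // -(hom X W1) // -(hom Y W1) //.
rewrite !Omega_phi !Omega_nablaa_phi !(additiveB (anchor_add _)).
have := congr1 (Om (phi (phi Z))) (jacobi X Y W1 I I I).
rewrite (skew W1 X) // (skew (phi W1) (br X Y)) // (additiveN (br_addr _)).
rewrite !Omega_addr !Omega_oppr (additive0 (Omega_addr _)) => jacobi_Om.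
by rewrite -jacobi_Om; ring.
Qed.

Lemma eigen_hom_bundle : is_hom_bundle_on eigen sigma phi.
Proof.
case: algebroid => _ [_ _ phi_onto phi_inj phi_comb] _ _; split.
- by split; [exact: eigen0 | exact: eigen_comb].
- exact: eigen_phi.
- move=> Y EY; have [X _ eX] := phi_onto Y I.
  by exists X => //; apply: eigen_phi_preimage; rewrite eX.
- by move=> X Y _ _; apply: phi_inj.
- by move=> f X Y _ _; apply: phi_comb.
Qed.

Lemma eigen_hom_lie_algebra : is_hom_lie_algebra_on eigen phi br.
Proof. by case: algebroid => _ _ lie _; apply: hom_lie_algebra_restrict eigen_br lie. Qed.

Lemma eigen_hom_lie_algebroid : is_hom_lie_algebroid_on eigen sigma phi br a.
Proof.
case: algebroid => pullback _ _ anchor; split.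
- exact: pullback.
- exact: eigen_hom_bundle.
- exact: eigen_hom_lie_algebra.
- exact: anchor_restrict.
Qed.

Lemma eigen_commutator_hom_lie :
  is_hom_lie_algebra_on eigen phi (fun X Y => nablaa X Y - nablaa Y X).
Proof.
apply: (hom_lie_algebra_congr (br := br)).
- exact: eigen_comb.
- exact: eigen_phi.
- exact: nablaa_commutator.
- exact: eigen_hom_lie_algebra.
Qed.

End ParaKahlerEigenbundles.

Theorem mainTheorem7 (R : realFieldType) (C : comAlgType R) (V : lmodType C)
    (sigma : C -> C) (phi : V -> V) (br : V -> V -> V) (a : V -> C -> C)
    (K : V -> V) (g : V -> V -> C) (nabla nablaa : V -> V -> V) :
  is_para_kahler sigma phi br a K g nabla ->
  (forall X Y Z, Omega phi K g (nablaa X Y) (phi Z)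
                 = a (phi X) (Omega phi K g Y Z) - Omega phi K g (phi Y) (br X Z)) ->
  forall eps : C, eps = 1 \/ eps = -1 ->
  let S := fun X : V => phi (K X) = eps *: X in
  [/\ (forall X Y, S X -> S Y -> S (nablaa X Y)),
      (forall X Y Z, S X -> S Y -> S Z ->
         nablaa (nablaa X Y) (phi Z) - nablaa (phi X) (nablaa Y Z)
         = nablaa (nablaa Y X) (phi Z) - nablaa (phi Y) (nablaa X Z)),
      (forall X Y, S X -> S Y -> nablaa X Y - nablaa Y X = br X Y),
      is_hom_lie_algebra_on S phi (fun X Y => nablaa X Y - nablaa Y X) &
      is_hom_lie_algebroid_on S sigma phi br a].
Proof.
move=> [algebroid metric para_complex para_hermitian [levi_civita kahler]].
move=> nablaa_def eps eps_sign S.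
have commutator := nablaa_commutator algebroid metric para_complex
  para_hermitian levi_civita kahler nablaa_def eps_sign.
split.
- exact: (eigen_nablaa algebroid metric para_complex para_hermitian
    levi_civita kahler nablaa_def eps_sign).
- move=> X Y Z SX SY _.
  apply: (nablaa_hom_left_symmetric algebroid metric para_complex nablaa_def).
  exact: commutator.
- exact: commutator.
- exact: (eigen_commutator_hom_lie algebroid metric para_complex para_hermitian
    levi_civita kahler nablaa_def eps_sign).
- exact: (eigen_hom_lie_algebroid algebroid para_complex levi_civita kahler eps_sign).
Qed.
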